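(* Let $\mathcal{A}\in\mathbb{R}^{d\times\cdots\times d}$ be an order-$k$ real tensor with the same dimension $d$ in all modes. For every level $1\le\ell\le k$ and every partition $\pi=\{B_1,\dots,B_\ell\}\in\mathcal{P}^\ell_{[k]}$, \[ d^{-(k-\max_{i\in[\ell]}|B_i|)/2}\|\mathcal{A}\|_F\le\|\mathrm{Unfold}_\pi(\mathcal{A})\|_\sigma\le\|\mathcal{A}\|_F . \]
   Context: $\|\mathcal{A}\|_F$ is the Frobenius norm. For a real tensor $\mathcal{T}\in\mathbb{R}^{e_1\times\cdots\times e_m}$, $\|\mathcal{T}\|_\sigma=\sup\{\sum t_{i_1\dots i_m}x^{(1)}_{i_1}\cdots x^{(m)}_{i_m}:\ \mathbf{x}_n\in\mathbb{R}^{e_n},\ \|\mathbf{x}_n\|_2=1\}$. $\mathcal{P}^\ell_{[k]}$ is the set of partitions of $[k]$ into exactly $\ell$ nonempty blocks. Unfolding: for $\pi=\{B_1,\dots,B_\ell\}$, $\mathrm{Unfold}_\pi(\mathcal{A})$ is the order-$\ell$ tensor of dimensions $(d^{|B_1|},\dots,d^{|B_\ell|})$ whose entry at $(m_1,\dots,m_\ell)$ is $a_{i_1\dots i_k}$, where $m_j$ corresponds to $(i_r)_{r\in B_j}$ under a fixed bijection $[d]^{B_j}\to[d^{|B_j|}]$. *)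

From HB Require Import structures.
From mathcomp Require Import all_boot all_order all_algebra.
From mathcomp Require Import boolp classical_sets reals exp.
Set Implicit Arguments. Unset Strict Implicit. Unset Printing Implicit Defensive.
Import Order.TTheory GRing.Theory Num.Theory.
Local Open Scope ring_scope.

Definition tensor (R : realType) (k d : nat) := {ffun 'I_k -> 'I_d} -> R.

Definition frob_norm (R : realType) (k d : nat) (A : tensor R k d) : R :=
  Num.sqrt (\sum_(g : {ffun 'I_k -> 'I_d}) A g ^+ 2).

Definition spec_norm (R : realType) (I : finType) (T : I -> finType)
    (t : {dffun forall i : I, T i} -> R) : R :=
  sup (fun v : R => exists x : forall i : I, T i -> R,
         (forall i : I, Num.sqrt (\sum_(j : T i) x i j ^+ 2) = 1) /\
         v = \sum_(idx : {dffun forall i : I, T i}) t idx * \prod_(i : I) x i (idx i)).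

Definition blk (k : nat) (P : {set {set 'I_k}}) := {B : {set 'I_k} | B \in P}.

Definition blk_index (k d : nat) (P : {set {set 'I_k}}) (B : blk P) : finType :=
  {ffun {i : 'I_k | i \in val B} -> 'I_d}.

(* Unfold_P(A): the order-|P| tensor whose entry at (m_B)_{B in P} is
   a_{i_1...i_k}, where (i_r)_{r in B} = m_B for every block B.  Since P covers
   [k], exactly one multi-index g is compatible, so the sum has one term. *)
Definition unfold (R : realType) (k d : nat) (P : {set {set 'I_k}})
    (A : tensor R k d) (idx : {dffun forall B : blk P, blk_index d B}) : R :=
  \sum_(g : {ffun 'I_k -> 'I_d} |
          [forall B : blk P, forall j : {i : 'I_k | i \in val B},
             g (val j) == idx B j]) A g.
Arguments unfold {R k d} P A idx.

From HB Require Import structures.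
From mathcomp Require Import all_boot all_order all_algebra.
From mathcomp Require Import reals exp.
From mathcomp Require boolp.
From mathcomp Require Import ring lra.
Import Order.TTheory GRing.Theory Num.Theory.
Local Open Scope ring_scope.

(* Write t for Unfold_P(A); its entries are those of A reindexed, so
   ||t||_F = ||A||_F.  The upper bound is Cauchy-Schwarz: a rank-one tensor
   built from unit vectors has Frobenius norm 1.  For the lower bound, fix the
   mode j of a largest block, of size m, and put standard basis vectors e_(a_i)
   in all other modes: the multilinear form then pairs the mode-j fibre of t
   through a with the vector in mode j, so the spectral norm dominates the
   Euclidean norm of every fibre.  Summing the squared fibre norms over all a
   counts every entry d^m times among d^k terms, so some fibre has squared norm
   at least ||t||_F^2 / d^(k-m). *)

Lemma bigA_distr_dffun {R : comPzSemiRingType} {I : finType} {T : I -> finType}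
    (F : forall i : I, T i -> R) :
  \sum_(f : {dffun forall i : I, T i}) \prod_(i : I) F i (f i) =
  \prod_(i : I) \sum_(y : T i) F i y.
Proof.
pose G i := [ffun y : T i => F i y].
have GE i y : G i y = F i y by rewrite ffunE.
transitivity (\sum_(f : {dffun forall i : I, T i}) \prod_(i : I) G i (f i)).
  by apply: eq_bigr => f _; apply: eq_bigr => i _; rewrite GE.
under [RHS]eq_bigr do under eq_bigr do rewrite -GE.
symmetry.
transitivity (\prod_(i : I) \sum_(j in tagged_with T i) untag 0 (G i) j).
  by apply: eq_bigr => i _; rewrite (big_tag (fun i (y : T i) => G i y)).
rewrite bigA_distr_big_dep -big_fprod.
rewrite (reindex (@fprod_of_dffun I T)); last exact/onW_bij/fprod_of_dffun_bij.
by apply: eq_bigr => f _; apply: eq_bigr => i _; rewrite /fprod_of_dffun fprodE.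
Qed.

Section UnitVectors.
Context {R : rcfType} {X : finType}.
Implicit Types a b : X -> R.

Lemma sumsq_ge0 a : 0 <= \sum_(y : X) a y ^+ 2.
Proof. by apply: sumr_ge0 => y _; rewrite sqr_ge0. Qed.

Lemma sqrt_sumsq_eq1 a :
  Num.sqrt (\sum_(y : X) a y ^+ 2) = 1 -> \sum_(y : X) a y ^+ 2 = 1.
Proof. by move=> h; rewrite -[LHS]sqr_sqrtr ?sumsq_ge0 // h expr1n. Qed.

Lemma sum_mul_le_sqrt_sumsq a b : Num.sqrt (\sum_(y : X) b y ^+ 2) = 1 ->
  \sum_(y : X) a y * b y <= Num.sqrt (\sum_(y : X) a y ^+ 2).
Proof.
move=> /sqrt_sumsq_eq1 b1; set v := \sum_y a y * b y.
have v2_le : v ^+ 2 <= \sum_y a y ^+ 2.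
  have := sumsq_ge0 (fun y => a y - v * b y).
  have -> : \sum_y (a y - v * b y) ^+ 2
      = \sum_y a y ^+ 2 - 2 * v * v + v ^+ 2 * \sum_y b y ^+ 2.
    rewrite mulr_sumr [2 * v * v]mulr_sumr -sumrB -big_split /=.
    by apply: eq_bigr => y _; ring.
  rewrite b1; lra.
by rewrite (le_trans (ler_norm v)) // -sqrtr_sqr ler_sqrt ?sumsq_ge0.
Qed.

Lemma sqrt_sumsq_attained (y0 : X) a : exists b : X -> R,
  Num.sqrt (\sum_(y : X) b y ^+ 2) = 1 /\
  \sum_(y : X) a y * b y = Num.sqrt (\sum_(y : X) a y ^+ 2).
Proof.
set N := Num.sqrt _; have [N0|N_neq0] := eqVneq N 0.
  exists (fun y => (y == y0)%:R); split.
    rewrite (bigD1 y0) //= eqxx expr1n big1 ?addr0 ?sqrtr1 // => y.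
    by move/negPf->; rewrite expr0n.
  have a0 y : a y = 0.
    move: N0 => /eqP; rewrite sqrtr_eq0 => le0.
    apply/eqP; rewrite -sqrf_eq0; apply/eqP.
    have sum0 : \sum_y a y ^+ 2 = 0 by apply/le_anti; rewrite le0 sumsq_ge0.
    by apply: (psumr_eq0P _ sum0) => // z _; rewrite sqr_ge0.
  by rewrite N0 big1 // => y _; rewrite a0 mul0r.
have N2 : N ^+ 2 = \sum_y a y ^+ 2 by rewrite sqr_sqrtr ?sumsq_ge0.
exists (fun y => a y / N); split.
  under eq_bigr do rewrite expr_div_n.
  by rewrite -mulr_suml -N2 divff ?sqrtr1 ?sqrf_eq0.
by under eq_bigr do rewrite mulrA -expr2; rewrite -mulr_suml -N2 expr2 mulfK.
Qed.

End UnitVectors.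

Lemma exists_ge_mean {R : realDomainType} {X : finType} (x0 : X) (F : X -> R) :
  exists a : X, \sum_(b : X) F b <= #|X|%:R * F a.
Proof.
have [a _ amax] := arg_maxP F (isT : xpredT x0).
exists a; rewrite -sum1_card natr_sum mulr_suml.
by apply: ler_sum => b _; rewrite mul1r; apply: amax.
Qed.

Lemma powR_Nhalf_sqr {R : realType} (x : R) (n : nat) :
  0 <= x -> (x `^ (- (n%:R / 2))) ^+ 2 = (x ^+ n)^-1.
Proof.
move=> x0; rewrite -powR_mulrn ?powR_ge0 // -powRrM mulNr divfK ?pnatr_eq0 //.
by rewrite powRN powR_mulrn.
Qed.

Lemma powR_Nhalf_mul_sqrt_le {R : realType} (x s v : R) (m k : nat) :
  0 < x -> 0 <= v -> (m <= k)%N -> x ^+ m * s <= x ^+ k * v ^+ 2 ->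
  x `^ (- ((k - m)%:R / 2)) * Num.sqrt s <= v.
Proof.
move=> x0 v0 mk; rewrite -{1}(subnKC mk) exprD -mulrA ler_pM2l ?exprn_gt0 //.
move=> s_le.
rewrite -[v]ger0_norm // -sqrtr_sqr -[_ `^ _]ger0_norm ?powR_ge0 // -sqrtr_sqr.
rewrite -sqrtrM ?sqr_ge0 // ler_sqrt ?sqr_ge0 // (powR_Nhalf_sqr _ _ (ltW x0)).
by rewrite ler_pdivrMl ?exprn_gt0.
Qed.

Section SpectralNorm.
Context {R : realType} {I : finType} {T : I -> finType}.
Local Notation D := {dffun forall i : I, T i}.
Implicit Types (t : D -> R) (x : forall i : I, T i -> R).

Definition mlform t x : R := \sum_(idx : D) t idx * \prod_(i : I) x i (idx i).

Definition unit_family x :=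
  forall i : I, Num.sqrt (\sum_(y : T i) x i y ^+ 2) = 1.

Lemma spec_normE t :
  spec_norm t = sup (fun v => exists2 x, unit_family x & v = mlform t x).
Proof.
congr sup; apply/boolp.funext => v; apply/boolp.propext.
by split=> [[x [ux ->]]|[x ux ->]]; exists x.
Qed.

Lemma sumsq_prod_unit_family x : unit_family x ->
  Num.sqrt (\sum_(idx : D) (\prod_(i : I) x i (idx i)) ^+ 2) = 1.
Proof.
move=> ux; under eq_bigr do rewrite -prodrXl.
rewrite (bigA_distr_dffun (fun i y => x i y ^+ 2)) big1 ?sqrtr1 // => i _.
exact/sqrt_sumsq_eq1/ux.
Qed.

Lemma mlform_le_sqrt_sumsq t x : unit_family x ->
  mlform t x <= Num.sqrt (\sum_(idx : D) t idx ^+ 2).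
Proof. by move=> /sumsq_prod_unit_family; apply: sum_mul_le_sqrt_sumsq. Qed.

Lemma spec_norm_le_sqrt_sumsq t :
  spec_norm t <= Num.sqrt (\sum_(idx : D) t idx ^+ 2).
Proof.
rewrite spec_normE; set E := (fun v => _).
have [[v Ev]|E0] := boolp.pselect (exists v, E v).
  apply: ge_sup; first by exists v.
  by move=> _ [x ux ->]; apply: mlform_le_sqrt_sumsq.
by rewrite sup_out ?sqrtr_ge0 // => -[].
Qed.

Lemma mlform_le_spec_norm t x : unit_family x -> mlform t x <= spec_norm t.
Proof.
move=> ux; rewrite spec_normE; apply: ub_le_sup; last by exists x.
exists (Num.sqrt (\sum_idx t idx ^+ 2)) => _ [x' ux' ->].
exact: mlform_le_sqrt_sumsq.
Qed.

Lemma mlform_dfwithN t x (j : I) :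
  mlform t (@dfwith I (fun i => T i -> R) x j (fun y => - x j y)) =
  - mlform t x.
Proof.
rewrite /mlform -sumrN; apply: eq_bigr => idx _; rewrite -mulrN; congr (_ * _).
rewrite (bigD1 j) //= [in RHS](bigD1 j) //= dfwith_in mulNr; congr (- (_ * _)).
by apply: eq_bigr => i ij; rewrite dfwith_out // eq_sym.
Qed.

Lemma spec_norm_ge0 t (j : I) : 0 <= spec_norm t.
Proof.
have [[x ux]|nox] := boolp.pselect (exists x, unit_family x); last first.
  by rewrite spec_normE sup_out // => -[[v [x ux _]] _]; apply: nox; exists x.
have ux' : unit_family (@dfwith I (fun i => T i -> R) x j (fun y => - x j y)).
  move=> i; case: dfwithP => [|i' _]; last exact: ux.
  by under eq_bigr do rewrite sqrrN; apply: ux.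
have := mlform_le_spec_norm t _ ux; have := mlform_le_spec_norm t _ ux'.
rewrite mlform_dfwithN; lra.
Qed.

Definition dfset (a : D) (j : I) (y : T j) : D :=
  [ffun i => @dfwith I T (fun i => a i) j y i].

Lemma dfset_in a j y : dfset a j y j = y.
Proof. by rewrite ffunE dfwith_in. Qed.

Lemma dfset_out a j y i : i != j -> dfset a j y i = a i.
Proof. by move=> ij; rewrite ffunE dfwith_out // eq_sym. Qed.

Lemma dfset_id a j : dfset a j (a j) = a.
Proof.
by apply/ffunP => i; have [->|ij] := eqVneq i j; rewrite ?dfset_in ?dfset_out.
Qed.

Lemma dfset_dfset a j y z : dfset (dfset a j y) j z = dfset a j z.
Proof.
by apply/ffunP => i; have [->|ij] := eqVneq i j; rewrite ?dfset_in ?dfset_out.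
Qed.

Definition fibre_family (a : D) (j : I) (f : T j -> R) :
    forall i : I, T i -> R :=
  @dfwith I (fun i => T i -> R) (fun i y => (a i == y)%:R) j f.

Lemma unit_fibre_family a j f : Num.sqrt (\sum_(y : T j) f y ^+ 2) = 1 ->
  unit_family (fibre_family a j f).
Proof.
move=> uf i; rewrite /fibre_family; case: dfwithP => [|i' _] //.
rewrite (bigD1 (a i')) //= eqxx expr1n big1 ?addr0 ?sqrtr1 // => y.
by rewrite eq_sym => /negPf->; rewrite expr0n.
Qed.

Lemma prod_fibre_family_dfset a j f y :
  \prod_(i : I) fibre_family a j f i (dfset a j y i) = f y.
Proof.
rewrite /fibre_family (bigD1 j) //= dfwith_in dfset_in big1 ?mulr1 // => i ij.
by rewrite dfwith_out 1?eq_sym // dfset_out // eqxx.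
Qed.

Lemma prod_fibre_family_off a j f (idx : D) : idx != dfset a j (idx j) ->
  \prod_(i : I) fibre_family a j f i (idx i) = 0.
Proof.
move=> idx_off.
have /existsP [i idx_i] : [exists i, idx i != dfset a j (idx j) i].
  rewrite -negb_forall; apply: contra idx_off => /forallP eq_idx.
  by apply/eqP/ffunP => i; apply/eqP.
have ij : i != j by apply: contraNneq idx_i => ->; rewrite dfset_in.
rewrite /fibre_family (bigD1 i) //= dfwith_out 1?eq_sym //.
by rewrite -(dfset_out a j (idx j) i ij) (negPf idx_i) mul0r.
Qed.

Lemma mlform_fibre_family t a j f :
  mlform t (fibre_family a j f) = \sum_(y : T j) t (dfset a j y) * f y.
Proof.
rewrite /mlform (partition_big (fun idx : D => idx j) xpredT) //=.
apply: eq_bigr => y _; rewrite (bigD1 (dfset a j y)) ?dfset_in //=.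
rewrite prod_fibre_family_dfset big1 ?addr0 // => idx /andP[/eqP idx_j idx_off].
by rewrite prod_fibre_family_off ?mulr0 // idx_j.
Qed.

Lemma fibre_norm_le_spec_norm t a j :
  Num.sqrt (\sum_(y : T j) t (dfset a j y) ^+ 2) <= spec_norm t.
Proof.
have [f [uf <-]] := sqrt_sumsq_attained (a j) (fun y => t (dfset a j y)).
by rewrite -mlform_fibre_family; apply/mlform_le_spec_norm/unit_fibre_family.
Qed.

Lemma sum_fibre_sumsq t j :
  \sum_(a : D) \sum_(y : T j) t (dfset a j y) ^+ 2 =
  #|T j|%:R * \sum_(a : D) t a ^+ 2.
Proof.
rewrite pair_big /=.
pose h (p : D * T j) := (dfset p.1 j p.2, p.1 j).
have hK : involutive h.
  by case=> a y; rewrite /h /= dfset_dfset dfset_id dfset_in.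
rewrite (reindex_inj (inv_inj hK)) /= /h /=.
under eq_bigr do rewrite dfset_dfset dfset_id.
rewrite -(pair_big predT predT (fun a (y : T j) => t a ^+ 2)) /= mulr_sumr.
by apply: eq_bigr => a _; rewrite sumr_const mulr_natl.
Qed.

Lemma card_mul_sumsq_le t j :
  #|T j|%:R * \sum_(a : D) t a ^+ 2 <= #|D|%:R * spec_norm t ^+ 2.
Proof.
have [a0 _|D0] := pickP (@predT D); last first.
  by rewrite big_pred0 // mulr0 mulr_ge0 ?sqr_ge0.
pose fibre_sumsq a := \sum_(y : T j) t (dfset a j y) ^+ 2.
have [a heavy_a] := exists_ge_mean a0 fibre_sumsq.
rewrite -sum_fibre_sumsq (le_trans heavy_a) // ler_wpM2l //.
rewrite -ler_sqrt ?sqr_ge0 // sqrtr_sqr.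
exact: le_trans (fibre_norm_le_spec_norm t a j) (ler_norm _).
Qed.

End SpectralNorm.

Section Unfolding.
Context {k d : nat} {P : {set {set 'I_k}}}.
Local Notation multi_index := {ffun 'I_k -> 'I_d}.
Local Notation block_index := {dffun forall B : blk P, blk_index d B}.

Lemma card_blk_index (B : blk P) : #|blk_index d B| = (d ^ #|val B|)%N.
Proof. by rewrite card_ffun card_ord card_sig. Qed.

Definition unfold_index (g : multi_index) : block_index :=
  [ffun B => [ffun j => g (val j)] : blk_index d B].

Hypothesis partP : partition P [set: 'I_k].

Let P_cover i : i \in cover P.
Proof. by case/and3P: partP => /eqP->; rewrite in_setT. Qed.

Definition block_of (i : 'I_k) : blk P :=
  exist _ (pblock P i) (pblock_mem (P_cover i)).

Let in_block_of i : i \in val (block_of i).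
Proof. exact: etrans (mem_pblock P i) (P_cover i). Qed.

Definition fold_index (idx : block_index) : multi_index :=
  [ffun i => idx (block_of i) (exist _ i (in_block_of i))].

Lemma unfold_indexK : cancel unfold_index fold_index.
Proof. by move=> g; apply/ffunP => i; rewrite !ffunE. Qed.

Lemma fold_indexK : cancel fold_index unfold_index.
Proof.
have trivP : trivIset P by case/and3P: partP.
move=> idx; apply/ffunP => B; apply/ffunP => -[i iB]; rewrite !ffunE /=.
have eB : block_of i = B.
  by apply: val_inj; rewrite /= (def_pblock trivP (valP B) iB).
by move: iB; case: _ / eB => iB; congr (idx _ _); apply: val_inj.
Qed.

Lemma unfold_index_bij : bijective unfold_index.
Proof. exact: Bijective unfold_indexK fold_indexK. Qed.

Lemma card_block_index : #|block_index| = (d ^ k)%N.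
Proof. by rewrite -(bij_eq_card unfold_index_bij) card_ffun !card_ord. Qed.

Lemma unfold_unfold_index (R : realType) (A : tensor R k d) g :
  unfold P A (unfold_index g) = A g.
Proof.
rewrite /unfold (big_pred1 g) // => g'; apply/idP/idP; last first.
  by move/eqP->; apply/forallP => B; apply/forallP => j; rewrite !ffunE.
move/forallP => g'E; apply/eqP/(can_inj unfold_indexK).
apply/ffunP => B; apply/ffunP => j.
by have := forallP (g'E B) j; rewrite !ffunE => /eqP.
Qed.

Lemma frob_norm_unfold (R : realType) (A : tensor R k d) :
  frob_norm A = Num.sqrt (\sum_(idx : block_index) unfold P A idx ^+ 2).
Proof.
rewrite /frob_norm (reindex unfold_index); last exact: onW_bij unfold_index_bij.
by under [in RHS]eq_bigr do rewrite unfold_unfold_index.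
Qed.

End Unfolding.

Theorem corollary4p13 (R : realType) (k d : nat) (A : tensor R k d)
    (l : nat) (P : {set {set 'I_k}}) :
  (1 <= l <= k)%N ->
  partition P [set: 'I_k] -> #|P| = l ->
  (d%:R `^ (- ((k - \max_(B in P) #|B|)%:R / 2)) * frob_norm A
     <= spec_norm (unfold P A)) /\
  spec_norm (unfold P A) <= frob_norm A.
Proof.
move=> /andP[l_gt0 l_le_k] partP cardP.
split; last by rewrite (frob_norm_unfold partP); apply: spec_norm_le_sqrt_sumsq.
have P_gt0 : (0 < #|P|)%N by rewrite cardP.
have [Bm BmP maxE] := eq_bigmax_cond (fun B : {set 'I_k} => #|B|) P_gt0.
pose jm : blk P := exist _ Bm BmP.
have [d0|d_gt0] := posnP d.
  suff -> : frob_norm A = 0 by rewrite mulr0; apply: spec_norm_ge0 jm.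
  rewrite /frob_norm big1 ?sqrtr0 // => g _.
  by case: (g (Ordinal (leq_trans l_gt0 l_le_k))); rewrite d0.
rewrite (frob_norm_unfold partP) maxE.
apply: powR_Nhalf_mul_sqrt_le; first by rewrite ltr0n.
- exact: spec_norm_ge0 jm.
- by rewrite -[X in (_ <= X)%N]card_ord max_card.
- have := card_mul_sumsq_le (unfold P A) jm.
  by rewrite card_blk_index (card_block_index partP) !natrX.
Qed.
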